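(* For any integer $n>1$ and any integer $1\le m\le n(n-1)$, the numbers $\lceil \frac{m}{n-1}\rceil$ and $n-((m-1)\bmod n)$ are two distinct integers in $\{1,\dots,n\}$.
   Context: $a\bmod b$ denotes the remainder of $a$ upon division by $b$, lying in $\{0,\dots,b-1\}$. *)

From mathcomp Require Import all_boot.
Set Implicit Arguments. Unset Strict Implicit. Unset Printing Implicit Defensive.

Definition ceil_div (m d : nat) : nat := (m + d.-1) %/ d.

(* Write m - 1 = q n + s with s < n, and d = n - 1; then q < d.  Since
   m = q d + (q + s + 1), the ceiling of m / d is q + 1 when s < d - q and
   q + 2 otherwise, while n - s = d + 1 - s lies strictly on the other side:
   it is at least q + 2 in the first case and at most q + 1 in the second. *)
From mathcomp Require Import all_boot zify.

Lemma ceil_div_eq (m d k : nat) : k * d < m <= k.+1 * d -> ceil_div m d = k.+1.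
Proof.
rewrite /ceil_div mulSn => /andP[lo hi].
have d_gt0 : 0 < d by lia.
have -> : m + d.-1 = k.+1 * d + (m - k * d).-1 by rewrite mulSn; lia.
by rewrite divnMDl // divn_small ?addn0 //; lia.
Qed.

Lemma ceil_div_mulS_addS (d q s : nat) : q < d -> s <= d ->
  ceil_div (q * d.+1 + s.+1) d = q.+1 + (d - q <= s).
Proof.
move=> q_lt s_le.
by case: (leqP (d - q) s) => h; rewrite ?addn1 ?addn0; apply: ceil_div_eq;
  rewrite !mulSn mulnS; lia.
Qed.

Theorem lemma8 (n m : nat) :
  1 < n -> 1 <= m <= n * (n - 1) ->
  let a := ceil_div m (n - 1) in
  let b := n - ((m - 1) %% n) in
  [/\ 1 <= a <= n, 1 <= b <= n & a != b].
Proof.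
move=> n_gt1 /andP[m_gt0 m_le] a b.
have [d def_n] : exists d, n = d.+1 by exists n.-1; lia.
set q := (m - 1) %/ n; set s := (m - 1) %% n.
have def_m : m = q * d.+1 + s.+1 by rewrite -def_n addnS -divn_eq; lia.
have q_lt : q < d by rewrite /q ltn_divLR; nia.
have s_le : s <= d by rewrite -ltnS -def_n ltn_mod; lia.
rewrite {}/a {}/b -/s def_m def_n subn1 ceil_div_mulS_addS //.
by case: (leqP (d - q) s) => h; rewrite ?addn0 ?addn1; split; lia.
Qed.
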